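(* Let $r(x)=e^{x^2/2}\int_x^\infty e^{-t^2/2}\,dt$ for $x\in\mathbb{R}$. Then: (a) On $(0,\infty)$, the function $x\mapsto x^\alpha r(x)$ is decreasing for $\alpha=0$, increasing for $\alpha=1$, and increasing then decreasing for $\alpha\in(0,1)$. (b) On $(0,\infty)$, the function $x\mapsto x^\alpha r'(x)$ is increasing for $\alpha=0$, decreasing for $\alpha=2$, and decreasing then increasing for $\alpha\in(0,2)$.
   Context: $r$ is Mill's ratio of the standard Gaussian law. *)

From Stdlib Require Import Reals.
From Coquelicot Require Import Coquelicot.
Open Scope R_scope.

Definition mills (x : R) : R :=
  exp (x ^ 2 / 2) *
  RInt_gen (fun t => exp (- (t ^ 2) / 2)) (at_point x) (Rbar_locally p_infty).

Definition incr_on (P : R -> Prop) (f : R -> R) : Prop :=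
  forall x y, P x -> P y -> x < y -> f x < f y.
Definition decr_on (P : R -> Prop) (f : R -> R) : Prop :=
  forall x y, P x -> P y -> x < y -> f y < f x.

Definition pos_half_line (x : R) : Prop := 0 < x.

Definition incr_then_decr (f : R -> R) : Prop :=
  exists c, 0 < c /\ incr_on (fun x => 0 < x <= c) f /\ decr_on (fun x => c <= x) f.
Definition decr_then_incr (f : R -> R) : Prop :=
  exists c, 0 < c /\ decr_on (fun x => 0 < x <= c) f /\ incr_on (fun x => c <= x) f.

(** Write [r = e^(x^2/2) Q] with [Q x = int_x^oo e^(-t^2/2) dt], so that
    [Q' = - e^(-x^2/2)].  For [x > 0] the derivatives of [x^a r] and [x^a r'] are
    [x^(a-1) e^(x^2/2)] times expressions [p Q + q e^(-x^2/2)] with polynomials [p], [q];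
    differentiating these a few more times cancels [Q] and leaves [e^(-x^2/2)] times a
    quadratic, which is negative then positive on [(0, oo)].  Every expression of the chain
    tends to 0 at infinity, by the Mills bound [x Q < e^(-x^2/2)], and a function vanishing
    at infinity whose derivative is negative then positive must be positive then negative
    if it starts positive (and symmetrically).  The signs at [x = 0], read off [Q 0 > 0],
    thus propagate the sign pattern back up the chain. *)

From Stdlib Require Import Reals Lra Psatz Classical.
From Coquelicot Require Import Coquelicot.
Open Scope R_scope.

Definition gauss (x : R) : R := exp (- (x ^ 2) / 2).
Definition gauss_recip (x : R) : R := exp (x ^ 2 / 2).

Lemma gauss_pos x : 0 < gauss x.
Proof. apply exp_pos. Qed.

Lemma gauss_recip_pos x : 0 < gauss_recip x.
Proof. apply exp_pos. Qed.

Lemma gauss_recip_mul_gauss x : gauss_recip x * gauss x = 1.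
Proof.
  unfold gauss_recip, gauss; rewrite <- exp_plus, <- exp_0; f_equal; field.
Qed.

Lemma is_derive_gauss x : is_derive gauss x (- x * gauss x).
Proof.
  unfold gauss; auto_derive; [easy |].
  replace (- (x * (x * 1)) * / 2) with (- x ^ 2 / 2) by field; field.
Qed.

Lemma is_derive_gauss_recip x : is_derive gauss_recip x (x * gauss_recip x).
Proof.
  unfold gauss_recip; auto_derive; [easy |].
  replace (x * (x * 1) * / 2) with (x ^ 2 / 2) by field; field.
Qed.

Lemma continuous_gauss x : continuous gauss x.
Proof. apply (@ex_derive_continuous R_AbsRing); eexists; apply is_derive_gauss. Qed.

Lemma lt_of_derive_pos (f f' : R -> R) x y :
  x < y -> (forall t, x <= t <= y -> is_derive f t (f' t)) ->
  (forall t, x < t < y -> 0 < f' t) -> f x < f y.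
Proof.
  intros Hxy Hd Hpos.
  destruct (MVT_cor2 f f' x y Hxy) as [c [Hmvt Hc]].
  - intros c Hc; apply is_derive_Reals, Hd, Hc.
  - specialize (Hpos c Hc); nra.
Qed.

Lemma le_of_derive_nonneg (f f' : R -> R) x y :
  x < y -> (forall t, x <= t <= y -> is_derive f t (f' t)) ->
  (forall t, x < t < y -> 0 <= f' t) -> f x <= f y.
Proof.
  intros Hxy Hd Hpos.
  destruct (MVT_cor2 f f' x y Hxy) as [c [Hmvt Hc]].
  - intros c Hc; apply is_derive_Reals, Hd, Hc.
  - specialize (Hpos c Hc); nra.
Qed.

Lemma is_lim_incr_bounded (f : R -> R) (M : R) :
  (forall x y, x < y -> f x < f y) -> (forall x, f x <= M) ->
  exists l : R, (forall x, f x < l) /\ is_lim f p_infty l.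
Proof.
  intros Hincr Hbound.
  set (range := fun y => exists x, y = f x).
  destruct (completeness range) as [l [Hub Hleast]].
  - exists M; intros y [x ->]; apply Hbound.
  - exists (f 0), 0; reflexivity.
  - assert (Hle : forall x, f x <= l) by (intros x; apply Hub; exists x; reflexivity).
    exists l; split.
    + intros x; apply Rlt_le_trans with (f (x + 1)); [apply Hincr; lra | apply Hle].
    + apply is_lim_spec; intros eps.
      assert (Happrox : exists x0, l - eps < f x0).
      { apply NNPP; intros Hno.
        assert (l <= l - eps) by
          (apply Hleast; intros y [x ->]; apply Rnot_lt_le; intros H; eauto).
        pose proof (cond_pos eps); lra. }
      destruct Happrox as [x0 Hx0]; exists x0; intros x Hx.
      pose proof (Hincr x0 x Hx); pose proof (Hle x).
      rewrite Rabs_left1; lra.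
Qed.

Lemma lt0_of_incr_is_lim0 (f f' : R -> R) a :
  (forall x, a < x -> is_derive f x (f' x)) -> (forall x, a < x -> 0 < f' x) ->
  is_lim f p_infty 0 -> forall x, a < x -> f x < 0.
Proof.
  intros Hd Hpos Hlim x Hx.
  assert (Hstep : forall y z, x <= y -> y < z -> f y < f z).
  { intros y z Hy Hyz; apply (lt_of_derive_pos f f'); auto;
      intros t Ht; [apply Hd | apply Hpos]; lra. }
  assert (Htail : Rbar_le (f (x + 1)) 0).
  { apply (is_lim_le_loc (fun _ => f (x + 1)) f p_infty); [| apply is_lim_const | exact Hlim].
    exists (x + 1); intros y Hy; left; apply Hstep; lra. }
  simpl in Htail; pose proof (Hstep x (x + 1)); lra.
Qed.

Definition gauss_prim (b : R) : R := RInt gauss 0 b.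
Definition gauss_tail (x : R) : R :=
  RInt_gen gauss (at_point x) (Rbar_locally p_infty).

Lemma is_derive_gauss_prim b : is_derive gauss_prim b (gauss b).
Proof.
  apply is_derive_RInt with 0; [| apply continuous_gauss].
  apply filter_forall; intros y; apply (@RInt_correct R_CompleteNormedModule).
  apply ex_RInt_continuous; intros; apply continuous_gauss.
Qed.

Lemma Derive_gauss_prim b : Derive (fun t => gauss_prim t) b = gauss b.
Proof. apply is_derive_unique, is_derive_gauss_prim. Qed.

Lemma gauss_prim_incr x y : x < y -> gauss_prim x < gauss_prim y.
Proof.
  intros Hxy; apply (lt_of_derive_pos _ gauss); auto.
  - intros t _; apply is_derive_gauss_prim.
  - intros t _; apply gauss_pos.
Qed.

Lemma gauss_le_exp t : gauss t <= exp (1 / 2 - t).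
Proof.
  unfold gauss; pose proof (pow2_ge_0 (t - 1)).
  destruct (Rle_lt_or_eq_dec (- t ^ 2 / 2) (1 / 2 - t)) as [Hlt | Heq]; [lra | |].
  - left; apply exp_increasing, Hlt.
  - rewrite Heq; right; reflexivity.
Qed.

Lemma gauss_prim_le b : gauss_prim b <= exp (1 / 2).
Proof.
  assert (Hprim0 : gauss_prim 0 = 0) by (unfold gauss_prim; rewrite RInt_point; reflexivity).
  pose proof (exp_pos (1 / 2)); pose proof (exp_pos (1 / 2 - b)).
  destruct (Rle_lt_dec b 0) as [Hb | Hb].
  - destruct Hb as [Hb | ->]; [pose proof (gauss_prim_incr b 0 Hb) |]; lra.
  - assert (Hdom : gauss_prim b + exp (1 / 2 - b) <= gauss_prim 0 + exp (1 / 2 - 0)).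
    { apply (le_of_derive_nonneg (fun t => - (gauss_prim t + exp (1 / 2 - t)))
               (fun t => exp (1 / 2 - t) - gauss t)) in Hb; [lra | |].
      - intros t _; auto_derive; [eexists; apply is_derive_gauss_prim |].
        rewrite Derive_gauss_prim; unfold Rminus; ring.
      - intros t _; pose proof (gauss_le_exp t); lra. }
    replace (1 / 2 - 0) with (1 / 2) in Hdom by ring; lra.
Qed.

Lemma gauss_tail_eq : exists l : R,
  (forall x, gauss_prim x < l) /\ is_lim gauss_prim p_infty l /\
  forall x, gauss_tail x = l - gauss_prim x.
Proof.
  destruct (is_lim_incr_bounded gauss_prim _ gauss_prim_incr gauss_prim_le)
    as [l [Hlt Hlim]].
  exists l; repeat split; auto; intros x.
  apply is_RInt_gen_unique.
  apply (is_RInt_gen_ext (Derive gauss_prim)).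
  - apply filter_forall; intros ab t _; apply is_derive_unique, is_derive_gauss_prim.
  - apply is_RInt_gen_Derive.
    + apply filter_forall; intros ab t _; eexists; apply is_derive_gauss_prim.
    + apply filter_forall; intros ab t _.
      apply (continuous_ext gauss); [| apply continuous_gauss].
      intros; symmetry; apply is_derive_unique, is_derive_gauss_prim.
    + intros P HP; apply (locally_singleton _ _ HP).
    + exact Hlim.
Qed.

Lemma is_derive_gauss_tail x : is_derive gauss_tail x (- gauss x).
Proof.
  destruct gauss_tail_eq as [l [_ [_ Heq]]].
  apply (is_derive_ext (fun t => l - gauss_prim t)); [intros; auto |].
  auto_derive; [eexists; apply is_derive_gauss_prim |].
  rewrite Derive_gauss_prim; ring.
Qed.

Lemma gauss_tail_pos x : 0 < gauss_tail x.
Proof.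
  destruct gauss_tail_eq as [l [Hlt [_ Heq]]].
  rewrite Heq; specialize (Hlt x); lra.
Qed.

Lemma is_lim_gauss_tail : is_lim gauss_tail p_infty 0.
Proof.
  destruct gauss_tail_eq as [l [_ [Hlim Heq]]].
  apply (is_lim_ext (fun x => l - gauss_prim x)); [auto |].
  replace (Finite 0) with (Finite (l - l)) by (f_equal; ring).
  apply is_lim_minus'; [apply is_lim_const | exact Hlim].
Qed.

Lemma mills_gauss x : mills x = gauss_recip x * gauss_tail x.
Proof. reflexivity. Qed.

Lemma sqr_div4_le_exp y : 0 <= y -> y * y / 4 <= exp y.
Proof.
  intros Hy.
  replace (exp y) with (exp (y / 2) * exp (y / 2)) by (rewrite <- exp_plus; f_equal; field).
  pose proof (exp_ineq1_le (y / 2)).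
  replace (y * y / 4) with ((y / 2) * (y / 2)) by field.
  apply Rmult_le_compat; lra.
Qed.

Lemma sqr_mul_gauss_le x : 1 <= x -> x ^ 2 * gauss x <= 16 / x.
Proof.
  intros Hx.
  pose proof (sqr_div4_le_exp (x ^ 2 / 2) ltac:(nra)) as Hexp; fold (gauss_recip x) in Hexp.
  pose proof (gauss_recip_mul_gauss x) as Hinv; pose proof (gauss_pos x).
  apply (Rmult_le_reg_r (x * gauss_recip x)); [pose proof (gauss_recip_pos x); nra |].
  replace (x ^ 2 * gauss x * (x * gauss_recip x)) with (x ^ 3) by
    (transitivity (x ^ 3 * (gauss_recip x * gauss x)); [rewrite Hinv |]; ring).
  replace (16 / x * (x * gauss_recip x)) with (16 * gauss_recip x) by (field; lra).
  assert (x ^ 3 <= x ^ 4) by (apply Rle_pow; auto with arith).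
  nra.
Qed.

Lemma is_lim_div_p_infty c : is_lim (fun x => c / x) p_infty 0.
Proof.
  replace (Finite 0) with (Rbar_mult c (Rbar_inv p_infty)) by (simpl; f_equal; ring).
  apply is_lim_scal_l, is_lim_inv; [apply is_lim_id | discriminate].
Qed.

Lemma is_lim_squeeze0 (f g : R -> R) :
  (forall x, 1 <= x -> 0 <= f x <= g x) -> is_lim g p_infty 0 -> is_lim f p_infty 0.
Proof.
  intros Hbound Hg; apply (is_lim_le_le_loc (fun _ => 0) g); [| apply is_lim_const | exact Hg].
  exists 1; intros x Hx; apply Hbound; lra.
Qed.

Lemma is_lim_sqr_mul_gauss : is_lim (fun x => x ^ 2 * gauss x) p_infty 0.
Proof.
  apply (is_lim_squeeze0 _ (fun x => 16 / x)); [| apply is_lim_div_p_infty].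
  intros x Hx; split; [pose proof (gauss_pos x); nra | apply sqr_mul_gauss_le, Hx].
Qed.

Lemma is_lim_pow_mul_gauss n : (n <= 2)%nat -> is_lim (fun x => x ^ n * gauss x) p_infty 0.
Proof.
  intros Hn; apply (is_lim_squeeze0 _ _ ) with (2 := is_lim_sqr_mul_gauss).
  intros x Hx; pose proof (gauss_pos x); pose proof (Rle_pow x n 2 Hx Hn).
  pose proof (pow_le x n ltac:(lra)); split; nra.
Qed.

Lemma Derive_gauss x : Derive (fun t => gauss t) x = - x * gauss x.
Proof. apply is_derive_unique, is_derive_gauss. Qed.

Lemma Derive_gauss_tail x : Derive (fun t => gauss_tail t) x = - gauss x.
Proof. apply is_derive_unique, is_derive_gauss_tail. Qed.

Lemma Derive_gauss_recip x : Derive (fun t => gauss_recip t) x = x * gauss_recip x.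
Proof. apply is_derive_unique, is_derive_gauss_recip. Qed.

Ltac derive_gauss :=
  auto_derive;
  [ repeat match goal with
    | |- _ /\ _ => split
    | |- True => exact I
    | |- ex_derive (fun t => gauss_tail t) _ => eexists; apply is_derive_gauss_tail
    | |- ex_derive (fun t => gauss t) _ => eexists; apply is_derive_gauss
    | |- ex_derive (fun t => gauss_recip t) _ => eexists; apply is_derive_gauss_recip
    end
  | rewrite ?Derive_gauss_tail, ?Derive_gauss, ?Derive_gauss_recip ].

Lemma mul_gauss_tail_lt x : 0 < x -> x * gauss_tail x < gauss x.
Proof.
  intros Hx.
  assert (Hneg : gauss_tail x - gauss x / x < 0).
  { apply (lt0_of_incr_is_lim0 (fun t => gauss_tail t - gauss t / t) (fun t => gauss t / t ^ 2) 0);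
      auto.
    - intros t Ht; derive_gauss; [lra | field; lra].
    - intros t Ht; apply Rdiv_lt_0_compat; [apply gauss_pos | nra].
    - replace (Finite 0) with (Finite (0 - 0)) by (f_equal; ring).
      apply is_lim_minus'; [apply is_lim_gauss_tail |].
      apply (is_lim_squeeze0 _ _) with (2 := is_lim_pow_mul_gauss 0 (le_0_n 2)).
      intros t Ht; pose proof (gauss_pos t); split.
      + apply Rdiv_le_0_compat; lra.
      + apply (Rmult_le_reg_r t); [lra |].
        replace (gauss t / t * t) with (gauss t) by (field; lra); simpl; nra. }
  apply (Rmult_lt_compat_l x) in Hneg; [| exact Hx].
  replace (x * (gauss_tail x - gauss x / x)) with (x * gauss_tail x - gauss x) in Hneg
    by (field; lra).
  lra.
Qed.

Lemma is_lim_pow_mul_gauss_tail n :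
  (n <= 3)%nat -> is_lim (fun x => x ^ n * gauss_tail x) p_infty 0.
Proof.
  intros Hn; apply (is_lim_squeeze0 _ _ ) with (2 := is_lim_sqr_mul_gauss).
  intros x Hx; pose proof (gauss_tail_pos x); pose proof (mul_gauss_tail_lt x ltac:(lra)).
  pose proof (Rle_pow x n 3 Hx Hn); pose proof (pow_le x n ltac:(lra)).
  assert (x ^ 3 * gauss_tail x <= x ^ 2 * gauss x).
  { replace (x ^ 3 * gauss_tail x) with (x ^ 2 * (x * gauss_tail x)) by ring.
    apply Rmult_le_compat_l; [apply pow_le |]; lra. }
  split; nra.
Qed.

Lemma is_lim0_plus (f g : R -> R) :
  is_lim f p_infty 0 -> is_lim g p_infty 0 -> is_lim (fun x => f x + g x) p_infty 0.
Proof.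
  intros Hf Hg; replace (Finite 0) with (Finite (0 + 0)) by (f_equal; ring).
  apply is_lim_plus'; assumption.
Qed.

Lemma is_lim0_scal (c : R) (f : R -> R) :
  is_lim f p_infty 0 -> is_lim (fun x => c * f x) p_infty 0.
Proof.
  intros Hf; replace (Finite 0) with (Rbar_mult c 0) by (simpl; f_equal; ring).
  apply is_lim_scal_l, Hf.
Qed.

Lemma is_lim_tail_comb (f : R -> R) c0 c1 c2 c3 d0 d1 d2 :
  (forall x, f x = (c0 + c1 * x + c2 * x ^ 2 + c3 * x ^ 3) * gauss_tail x
                   + (d0 + d1 * x + d2 * x ^ 2) * gauss x) ->
  is_lim f p_infty 0.
Proof.
  intros Hf.
  apply (is_lim_ext (fun x =>
    c0 * (x ^ 0 * gauss_tail x) + c1 * (x ^ 1 * gauss_tail x) + c2 * (x ^ 2 * gauss_tail x)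
    + c3 * (x ^ 3 * gauss_tail x) + d0 * (x ^ 0 * gauss x) + d1 * (x ^ 1 * gauss x)
    + d2 * (x ^ 2 * gauss x))); [intros x; rewrite Hf; ring |].
  repeat apply is_lim0_plus; apply is_lim0_scal;
    first [apply is_lim_pow_mul_gauss_tail | apply is_lim_pow_mul_gauss]; auto with arith.
Qed.

Definition pos_then_neg (f : R -> R) : Prop :=
  exists c, 0 < c /\ (forall x, 0 < x < c -> 0 < f x) /\ (forall x, c < x -> f x < 0).
Definition neg_then_pos (f : R -> R) : Prop := pos_then_neg (fun x => - f x).

Lemma pos_then_neg_of_derive (f f' : R -> R) :
  (forall x, is_derive f x (f' x)) -> is_lim f p_infty 0 -> 0 < f 0 ->
  neg_then_pos f' -> pos_then_neg f.
Proof.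
  intros Hd Hlim Hf0 [c [Hc [Hdown Hup]]].
  assert (Htail : forall x, c < x -> f x < 0).
  { apply (lt0_of_incr_is_lim0 f f'); auto; intros x Hx; specialize (Hup x Hx); lra. }
  assert (Hdecr : forall x y, 0 <= x -> x < y -> y <= c -> f y < f x).
  { intros x y Hx Hxy Hy.
    enough (- f x < - f y) by lra.
    apply (lt_of_derive_pos (fun t => - f t) (fun t => - f' t)); auto.
    - intros t _; apply (is_derive_opp f), Hd.
    - intros t Ht; apply Hdown; lra. }
  assert (Hfc : f c < 0).
  { enough (f c < f (c + 1)) by (pose proof (Htail (c + 1)); lra).
    apply (lt_of_derive_pos f f'); auto; [lra |].
    intros t Ht; specialize (Hup t ltac:(lra)); lra. }
  assert (Hcont : continuity (fun t => - f t)).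
  { intros t; apply continuity_pt_opp, continuity_pt_filterlim.
    apply (@ex_derive_continuous R_AbsRing); eexists; apply Hd. }
  destruct (IVT _ 0 c Hcont Hc ltac:(lra) ltac:(lra)) as [z [Hz Hfz]].
  assert (0 < z < c) by (split; apply Rnot_le_lt; intros Hle;
    [replace z with 0 in Hfz | replace z with c in Hfz]; lra).
  exists z; repeat split; try lra.
  - intros x Hx; pose proof (Hdecr x z); lra.
  - intros x Hx; destruct (Rle_lt_dec x c); [pose proof (Hdecr z x) | apply Htail]; lra.
Qed.

Lemma neg_then_pos_of_derive (f f' : R -> R) :
  (forall x, is_derive f x (f' x)) -> is_lim f p_infty 0 -> f 0 < 0 ->
  pos_then_neg f' -> neg_then_pos f.
Proof.
  intros Hd Hlim Hf0 [c [Hc [Hpos Hneg]]].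
  apply (pos_then_neg_of_derive _ (fun x => - f' x)).
  - intros x; apply (is_derive_opp f), Hd.
  - replace (Finite 0) with (Rbar_opp 0) by (simpl; f_equal; ring).
    apply is_lim_opp, Hlim.
  - lra.
  - exists c; repeat split; auto; intros x Hx; [specialize (Hpos x Hx) | specialize (Hneg x Hx)];
      lra.
Qed.

Lemma neg_then_pos_weighted_quadratic (w : R -> R) p q :
  (forall x, 0 < w x) -> 0 < p -> 0 < q -> neg_then_pos (fun x => w x * (p * x ^ 2 - q)).
Proof.
  intros Hw Hp Hq.
  assert (Hqp : 0 < q / p) by (apply Rdiv_lt_0_compat; assumption).
  exists (sqrt (q / p)); pose proof (sqrt_lt_R0 _ Hqp).
  assert (Hroot : p * (sqrt (q / p) * sqrt (q / p)) = q)
    by (rewrite sqrt_sqrt by lra; field; lra).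
  repeat split; auto; intros x Hx; pose proof (Hw x).
  - assert (p * x ^ 2 - q < 0) by (assert (x * x < sqrt (q / p) * sqrt (q / p)) by nra; nra).
    nra.
  - assert (0 < p * x ^ 2 - q) by (assert (sqrt (q / p) * sqrt (q / p) < x * x) by nra; nra).
    nra.
Qed.

(* [(x^a r)' = x^(a-1) e^(x^2/2) gA0 a x] and [(x^a r')' = x^(a-1) e^(x^2/2) gB0 a x]. *)
Definition gA0 (a x : R) : R := (a + x ^ 2) * gauss_tail x - x * gauss x.
Definition gA1 (a x : R) : R := 2 * x * gauss_tail x - (a + 1) * gauss x.
Definition gA2 (a x : R) : R := 2 * gauss_tail x + (a - 1) * x * gauss x.
Definition gA3 (a x : R) : R := gauss x * ((1 - a) * x ^ 2 - (3 - a)).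
Definition gB0 (a x : R) : R := ((a + 1) * x + x ^ 3) * gauss_tail x - (a + x ^ 2) * gauss x.
Definition gB1 (a x : R) : R := (a + 1 + 3 * x ^ 2) * gauss_tail x - 3 * x * gauss x.
Definition gB2 (a x : R) : R := 6 * x * gauss_tail x - (a + 4) * gauss x.
Definition gB3 (a x : R) : R := 6 * gauss_tail x + (a - 2) * x * gauss x.
Definition gB4 (a x : R) : R := gauss x * ((2 - a) * x ^ 2 - (8 - a)).

Lemma is_derive_gA0 a x : is_derive (gA0 a) x (gA1 a x).
Proof. unfold gA0, gA1; derive_gauss; ring. Qed.
Lemma is_derive_gA1 a x : is_derive (gA1 a) x (gA2 a x).
Proof. unfold gA1, gA2; derive_gauss; ring. Qed.
Lemma is_derive_gA2 a x : is_derive (gA2 a) x (gA3 a x).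
Proof. unfold gA2, gA3; derive_gauss; ring. Qed.
Lemma is_derive_gB0 a x : is_derive (gB0 a) x (gB1 a x).
Proof. unfold gB0, gB1; derive_gauss; ring. Qed.
Lemma is_derive_gB1 a x : is_derive (gB1 a) x (gB2 a x).
Proof. unfold gB1, gB2; derive_gauss; ring. Qed.
Lemma is_derive_gB2 a x : is_derive (gB2 a) x (gB3 a x).
Proof. unfold gB2, gB3; derive_gauss; ring. Qed.
Lemma is_derive_gB3 a x : is_derive (gB3 a) x (gB4 a x).
Proof. unfold gB3, gB4; derive_gauss; ring. Qed.

Lemma is_lim_gA0 a : is_lim (gA0 a) p_infty 0.
Proof. apply (is_lim_tail_comb _ a 0 1 0 0 (-1) 0); intros; unfold gA0; ring. Qed.
Lemma is_lim_gA1 a : is_lim (gA1 a) p_infty 0.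
Proof. apply (is_lim_tail_comb _ 0 2 0 0 (- (a + 1)) 0 0); intros; unfold gA1; ring. Qed.
Lemma is_lim_gA2 a : is_lim (gA2 a) p_infty 0.
Proof. apply (is_lim_tail_comb _ 2 0 0 0 0 (a - 1) 0); intros; unfold gA2; ring. Qed.
Lemma is_lim_gB0 a : is_lim (gB0 a) p_infty 0.
Proof. apply (is_lim_tail_comb _ 0 (a + 1) 0 1 (- a) 0 (-1)); intros; unfold gB0; ring. Qed.
Lemma is_lim_gB1 a : is_lim (gB1 a) p_infty 0.
Proof. apply (is_lim_tail_comb _ (a + 1) 0 3 0 0 (-3) 0); intros; unfold gB1; ring. Qed.
Lemma is_lim_gB2 a : is_lim (gB2 a) p_infty 0.
Proof. apply (is_lim_tail_comb _ 0 6 0 0 (- (a + 4)) 0 0); intros; unfold gB2; ring. Qed.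
Lemma is_lim_gB3 a : is_lim (gB3 a) p_infty 0.
Proof. apply (is_lim_tail_comb _ 6 0 0 0 0 (a - 2) 0); intros; unfold gB3; ring. Qed.

Lemma gA0_pos_then_neg a : 0 < a < 1 -> pos_then_neg (gA0 a).
Proof.
  intros Ha; pose proof (gauss_pos 0); pose proof (gauss_tail_pos 0).
  apply (pos_then_neg_of_derive _ _ (is_derive_gA0 a) (is_lim_gA0 a));
    [unfold gA0; simpl; nra |].
  apply (neg_then_pos_of_derive _ _ (is_derive_gA1 a) (is_lim_gA1 a)); [unfold gA1; nra |].
  apply (pos_then_neg_of_derive _ _ (is_derive_gA2 a) (is_lim_gA2 a)); [unfold gA2; nra |].
  apply neg_then_pos_weighted_quadratic; [exact gauss_pos | lra | lra].
Qed.

Lemma gB0_neg_then_pos a : 0 < a < 2 -> neg_then_pos (gB0 a).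
Proof.
  intros Ha; pose proof (gauss_pos 0); pose proof (gauss_tail_pos 0).
  apply (neg_then_pos_of_derive _ _ (is_derive_gB0 a) (is_lim_gB0 a));
    [unfold gB0; simpl; nra |].
  apply (pos_then_neg_of_derive _ _ (is_derive_gB1 a) (is_lim_gB1 a));
    [unfold gB1; simpl; nra |].
  apply (neg_then_pos_of_derive _ _ (is_derive_gB2 a) (is_lim_gB2 a)); [unfold gB2; nra |].
  apply (pos_then_neg_of_derive _ _ (is_derive_gB3 a) (is_lim_gB3 a)); [unfold gB3; nra |].
  apply neg_then_pos_weighted_quadratic; [exact gauss_pos | lra | lra].
Qed.

Lemma gA0_0_neg x : 0 < x -> gA0 0 x < 0.
Proof.
  intros Hx; pose proof (mul_gauss_tail_lt x Hx); unfold gA0.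
  replace ((0 + x ^ 2) * gauss_tail x - x * gauss x)
    with (x * (x * gauss_tail x - gauss x)) by ring.
  nra.
Qed.

Lemma gA0_1_pos x : 0 < x -> 0 < gA0 1 x.
Proof.
  intros Hx.
  enough (- gA0 1 x < 0) by lra.
  apply (lt0_of_incr_is_lim0 (fun t => - gA0 1 t) (fun t => - gA1 1 t) 0); auto.
  - intros t _; apply (is_derive_opp (gA0 1)), is_derive_gA0.
  - intros t Ht; pose proof (mul_gauss_tail_lt t Ht); unfold gA1; lra.
  - replace (Finite 0) with (Rbar_opp 0) by (simpl; f_equal; ring).
    apply is_lim_opp, is_lim_gA0.
Qed.

Lemma gB0_0_pos x : 0 < x -> 0 < gB0 0 x.
Proof.
  intros Hx; pose proof (gA0_1_pos x Hx).
  replace (gB0 0 x) with (x * gA0 1 x) by (unfold gB0, gA0; ring).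
  nra.
Qed.

Lemma gB0_2_neg x : 0 < x -> gB0 2 x < 0.
Proof.
  intros Hx; apply (lt0_of_incr_is_lim0 _ (gB1 2) 0); auto.
  - intros t _; apply is_derive_gB0.
  - intros t Ht; pose proof (gA0_1_pos t Ht).
    replace (gB1 2 t) with (3 * gA0 1 t) by (unfold gB1, gA0; ring); lra.
  - apply is_lim_gB0.
Qed.

Lemma is_derive_Rpower a x : 0 < x -> is_derive (fun t => Rpower t a) x (a * Rpower x (a - 1)).
Proof. intros Hx; apply is_derive_Reals, derivable_pt_lim_power, Hx. Qed.

Lemma is_derive_Rpower_mul a (f : R -> R) x l : 0 < x -> is_derive f x l ->
  is_derive (fun t => Rpower t a * f t) x (Rpower x (a - 1) * (a * f x + x * l)).
Proof.
  intros Hx Hf.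
  replace (Rpower x (a - 1) * (a * f x + x * l))
    with (a * Rpower x (a - 1) * f x + Rpower x a * l).
  - apply (is_derive_mult (fun t => Rpower t a) f); auto using is_derive_Rpower.
    intros; apply Rmult_comm.
  - replace (Rpower x a) with (Rpower x (a - 1 + 1)) by (f_equal; ring).
    rewrite Rpower_plus, Rpower_1 by exact Hx; ring.
Qed.

Lemma is_derive_mills x : is_derive mills x (gauss_recip x * (x * gauss_tail x - gauss x)).
Proof.
  apply (is_derive_ext (fun t => gauss_recip t * gauss_tail t)); [intros; reflexivity |].
  derive_gauss; ring.
Qed.

Lemma is_derive_Derive_mills x :
  is_derive (Derive mills) x (gauss_recip x * gA0 1 x).
Proof.
  apply (is_derive_ext (fun t => gauss_recip t * (t * gauss_tail t - gauss t))).
  - intros t; symmetry; apply is_derive_unique, is_derive_mills.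
  - unfold gA0; derive_gauss; ring.
Qed.

Lemma is_derive_Rpower_mul_mills a x : 0 < x ->
  is_derive (fun t => Rpower t a * mills t) x (Rpower x (a - 1) * gauss_recip x * gA0 a x).
Proof.
  intros Hx.
  replace (Rpower x (a - 1) * gauss_recip x * gA0 a x) with (Rpower x (a - 1) *
    (a * mills x + x * (gauss_recip x * (x * gauss_tail x - gauss x))))
    by (rewrite mills_gauss; unfold gA0; ring).
  apply is_derive_Rpower_mul, is_derive_mills; exact Hx.
Qed.

Lemma is_derive_Rpower_mul_Derive_mills a x : 0 < x ->
  is_derive (fun t => Rpower t a * Derive mills t) x
    (Rpower x (a - 1) * gauss_recip x * gB0 a x).
Proof.
  intros Hx.
  replace (Rpower x (a - 1) * gauss_recip x * gB0 a x) with (Rpower x (a - 1) *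
    (a * Derive mills x + x * (gauss_recip x * gA0 1 x))).
  - apply is_derive_Rpower_mul, is_derive_Derive_mills; exact Hx.
  - rewrite (is_derive_unique _ _ _ (is_derive_mills x)); unfold gA0, gB0; ring.
Qed.

Lemma Rpower_mul_gauss_recip_pos a x : 0 < Rpower x a * gauss_recip x.
Proof. apply Rmult_lt_0_compat; [apply exp_pos | apply gauss_recip_pos]. Qed.

Section MonotoneBySign.

Variables u w g : R -> R.
Hypothesis u_derive : forall t, 0 < t -> is_derive u t (w t * g t).
Hypothesis w_pos : forall t, 0 < t -> 0 < w t.

Lemma incr_on_of_sign (P : R -> Prop) : (forall x, P x -> 0 < x) ->
  (forall x y t, P x -> P y -> x < t < y -> 0 < g t) -> incr_on P u.
Proof.
  intros HP Hg x y Hx Hy Hxy; pose proof (HP x Hx).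
  apply (lt_of_derive_pos u (fun t => w t * g t)); auto.
  - intros t Ht; apply u_derive; lra.
  - intros t Ht; apply Rmult_lt_0_compat; [apply w_pos; lra | eauto].
Qed.

Lemma decr_on_of_sign (P : R -> Prop) : (forall x, P x -> 0 < x) ->
  (forall x y t, P x -> P y -> x < t < y -> g t < 0) -> decr_on P u.
Proof.
  intros HP Hg x y Hx Hy Hxy; pose proof (HP x Hx).
  enough (- u x < - u y) by lra.
  apply (lt_of_derive_pos (fun t => - u t) (fun t => - (w t * g t))); auto.
  - intros t Ht; apply (is_derive_opp u), u_derive; lra.
  - intros t Ht; pose proof (w_pos t ltac:(lra)); pose proof (Hg x y t Hx Hy Ht); nra.
Qed.

Lemma incr_on_pos_half_line : (forall t, 0 < t -> 0 < g t) -> incr_on pos_half_line u.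
Proof.
  intros Hg; apply incr_on_of_sign; [easy |].
  intros x y t Hx _ Ht; apply Hg; unfold pos_half_line in Hx; lra.
Qed.

Lemma decr_on_pos_half_line : (forall t, 0 < t -> g t < 0) -> decr_on pos_half_line u.
Proof.
  intros Hg; apply decr_on_of_sign; [easy |].
  intros x y t Hx _ Ht; apply Hg; unfold pos_half_line in Hx; lra.
Qed.

Lemma incr_then_decr_of_sign : pos_then_neg g -> incr_then_decr u.
Proof.
  intros [c [Hc [Hpos Hneg]]]; exists c; repeat split; auto.
  - apply incr_on_of_sign; [intros x Hx; lra |].
    intros x y t Hx Hy Ht; apply Hpos; lra.
  - apply decr_on_of_sign; [intros x Hx; lra |].
    intros x y t Hx Hy Ht; apply Hneg; lra.
Qed.

Lemma decr_then_incr_of_sign : neg_then_pos g -> decr_then_incr u.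
Proof.
  intros [c [Hc [Hneg Hpos]]]; exists c; repeat split; auto.
  - apply decr_on_of_sign; [intros x Hx; lra |].
    intros x y t Hx Hy Ht; specialize (Hneg t ltac:(lra)); lra.
  - apply incr_on_of_sign; [intros x Hx; lra |].
    intros x y t Hx Hy Ht; specialize (Hpos t ltac:(lra)); lra.
Qed.

End MonotoneBySign.

Theorem proposition9 :
  (* (a) *)
  (decr_on pos_half_line (fun x => Rpower x 0 * mills x) /\
   incr_on pos_half_line (fun x => Rpower x 1 * mills x) /\
   (forall a, 0 < a < 1 -> incr_then_decr (fun x => Rpower x a * mills x))) /\
  (* (b) *)
  (incr_on pos_half_line (fun x => Rpower x 0 * Derive mills x) /\
   decr_on pos_half_line (fun x => Rpower x 2 * Derive mills x) /\
   (forall a, 0 < a < 2 -> decr_then_incr (fun x => Rpower x a * Derive mills x))).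
Proof.
  pose proof (fun a => Rpower_mul_gauss_recip_pos (a - 1)) as Hw.
  pose proof is_derive_Rpower_mul_mills as HA.
  pose proof is_derive_Rpower_mul_Derive_mills as HB.
  repeat split.
  - apply (decr_on_pos_half_line _ _ _ (HA 0) (fun t _ => Hw 0 t)), gA0_0_neg.
  - apply (incr_on_pos_half_line _ _ _ (HA 1) (fun t _ => Hw 1 t)), gA0_1_pos.
  - intros a Ha.
    apply (incr_then_decr_of_sign _ _ _ (HA a) (fun t _ => Hw a t)), gA0_pos_then_neg, Ha.
  - apply (incr_on_pos_half_line _ _ _ (HB 0) (fun t _ => Hw 0 t)), gB0_0_pos.
  - apply (decr_on_pos_half_line _ _ _ (HB 2) (fun t _ => Hw 2 t)), gB0_2_neg.
  - intros a Ha.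
    apply (decr_then_incr_of_sign _ _ _ (HB a) (fun t _ => Hw a t)), gB0_neg_then_pos, Ha.
Qed.
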